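(* Fix $\varepsilon>0$, $\beta\in(0,1)$, an even integer $d>4(e^{2\varepsilon}-1)^2\ln\frac2\beta$, and $\varepsilon$-private randomizers $R_1,\dots,R_n:[d]\to\mathcal Y$. Let $v=(e^{2\varepsilon}-1)\sqrt{\frac4d\ln\frac2\beta}$. If $H$ is chosen uniformly among subsets of $[d]$ of size $d/2$, then with probability at least $5/6$ over $H$, both of the following hold: \[ \forall i\in[n]:\ \Pr\left[R_i(\mathbf U)\in\mathit{Leak}(v,H,R_i)\right]<6\beta n,\qquad \forall i\in[n]:\ \Pr\left[R_i(\mathbf U_H)\in\mathit{Leak}(v,H,R_i)\right]<6e^{\varepsilon}\beta n . \]
   Context: $\mathcal Y$ is a countable message set. A randomizer $R:[d]\to\mathcal Y$ is $\varepsilon$-private if for all $x,x'\in[d]$ and all $Y\subseteq\mathcal Y$, $\Pr[R(x)\in Y]\le e^{\varepsilon}\Pr[R(x')\in Y]$. $\mathbf U$ is the uniform distribution on $[d]$; for $H\subseteq[d]$, $\mathbf U_H$ is the uniform distribution on $H$; $R(\mathbf U)$, $R(\mathbf U_H)$ are the distributions of $R(\hat x)$ for $\hat x\sim\mathbf U$, resp. $\hat x\sim\mathbf U_H$. For $H\subset[d]$ with $|H|=d/2$, a message $y$ is $v$-leaky with respect to $H,R$ if $\left|\ln\frac{\Pr[R(\mathbf U_H)=y]}{\Pr[R(\mathbf U)=y]}\right|>v$ (messages with $\Pr[R(\mathbf U)=y]=0$ are regarded as not leaky), and $\mathit{Leak}(v,H,R)$ is the set of $y\in\mathcal Y$ that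 are $v$-leaky with respect to $H,R$. *)

From Stdlib Require Import Reals List Arith ClassicalEpsilon.
Import ListNotations.
Open Scope R_scope.

Definition Sum (f : nat -> R) : R :=
  epsilon (inhabits 0%R) (fun l => infinite_sum f l).

(* Message set Y = nat (a countable set).  Input set [d] = {0,...,d-1}.
   A randomizer Rz : [d] -> Y is given by its probability mass functions:
   Rz x y = Pr[R(x) = y]. *)
Definition is_randomizer (d : nat) (Rz : nat -> nat -> R) : Prop :=
  forall x, (x < d)%nat -> (forall y, 0 <= Rz x y) /\ infinite_sum (Rz x) 1.

Definition PrIn (p : nat -> R) (S : nat -> bool) : R :=
  Sum (fun y => if S y then p y else 0).

Definition eps_private (d : nat) (eps : R) (Rz : nat -> nat -> R) : Prop :=
  forall (x x' : nat) (S : nat -> bool), (x < d)%nat -> (x' < d)%nat ->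
    PrIn (Rz x) S <= exp eps * PrIn (Rz x') S.

Definition fsum (d : nat) (f : nat -> R) : R :=
  fold_right Rplus 0 (map f (seq 0 d)).

(* Subsets H of [d] are characteristic vectors h : list bool of length d;
   x \in H  iff  nth x h false = true. *)
Definition memH (h : list bool) (x : nat) : bool := nth x h false.

Definition card_true (h : list bool) : nat := length (filter (fun b => b) h).

Fixpoint bool_lists (n : nat) : list (list bool) :=
  match n with
  | O => [nil]
  | S m => map (cons true) (bool_lists m) ++ map (cons false) (bool_lists m)
  end.

Definition half_subsets (d : nat) : list (list bool) :=
  filter (fun h => Nat.eqb (card_true h) (d / 2)) (bool_lists d).

Definition pU (d : nat) (Rz : nat -> nat -> R) (y : nat) : R :=
  / INR d * fsum d (fun x => Rz x y).

Definition pUH (d : nat) (Rz : nat -> nat -> R) (h : list bool) (y : nat) : R :=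
  / INR (card_true h) * fsum d (fun x => if memH h x then Rz x y else 0).

(* y is v-leaky w.r.t. H, R : |ln(Pr[R(U_H)=y]/Pr[R(U)=y])| > v, where messages
   with Pr[R(U)=y] = 0 are not leaky, and ln 0 = -infinity (so a ratio 0 is leaky). *)
Definition leaky (d : nat) (v : R) (h : list bool) (Rz : nat -> nat -> R) (y : nat) : Prop :=
  0 < pU d Rz y /\
  (pUH d Rz h y = 0 \/ Rabs (ln (pUH d Rz h y / pU d Rz y)) > v).

Definition Leak (d : nat) (v : R) (h : list bool) (Rz : nat -> nat -> R) : nat -> bool :=
  fun y => if excluded_middle_informative (leaky d v h Rz y) then true else false.

Definition to_bool (P : Prop) : bool :=
  if excluded_middle_informative P then true else false.

Definition PrH (d : nat) (P : list bool -> Prop) : R :=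
  INR (length (filter (fun h => to_bool (P h)) (half_subsets d)))
  / INR (length (half_subsets d)).

(* Fix a message [y] with [P = Pr[R(U) = y] > 0] and put [w x = Pr[R(x) = y] / P]. These
   weights have mean 1 and, by privacy, lie in an interval of width [e^eps - 1]. The message
   is [v]-leaky for [H] exactly when the mean of [w] over [H] is off from 1 by a factor
   outside [e^(-v), e^v], which forces the sum of [w] over [H] to be [d v / 4] away from its
   expectation [d/2]. Hoeffding's inequality for sampling without replacement (via the moment
   generating function, revealing the membership of one element of [[d]] at a time) shows
   that this happens for at most a [beta/2] fraction of the half-size sets [H]. Summing over
   messages, the leaked mass under [U] has average at most [beta/2] over [H], and under
   [U_H] at most [e^eps beta/2], since [Pr[R(U_H) = y] <= e^eps Pr[R(U) = y]]. Markov's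
   inequality and a union bound over the [n] randomizers and the two events conclude. *)

From Coquelicot Require Import Coquelicot.
From Stdlib Require Import Reals Lra Lia List Arith ClassicalEpsilon FunctionalExtensionality.
Import ListNotations.
Open Scope R_scope.

Lemma exp_le_compat x y : x <= y -> exp x <= exp y.
Proof. intros [H|H]; [left; now apply exp_increasing | subst; lra]. Qed.

Lemma exp_sub_1_pos x : 0 < x -> 0 < exp x - 1.
Proof. intros Hx; assert (H := exp_increasing 0 x Hx); rewrite exp_0 in H; lra. Qed.

Definition lsum {A : Type} (f : A -> R) (l : list A) : R := fold_right Rplus 0 (map f l).

Section ListSums.
Context {A : Type}.
Implicit Types (f g : A -> R) (l : list A).

Lemma lsum_nil f : lsum f [] = 0.
Proof. reflexivity. Qed.

Lemma lsum_cons f a l : lsum f (a :: l) = f a + lsum f l.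
Proof. reflexivity. Qed.

Lemma lsum_app f l1 l2 : lsum f (l1 ++ l2) = lsum f l1 + lsum f l2.
Proof.
  induction l1 as [|a l1 IH]; [now rewrite lsum_nil, Rplus_0_l|].
  simpl app; rewrite !lsum_cons, IH; ring.
Qed.

Lemma lsum_map {B : Type} f (g : B -> A) (l : list B) :
  lsum f (map g l) = lsum (fun b => f (g b)) l.
Proof. unfold lsum; now rewrite map_map. Qed.

Lemma lsum_ext_in f g l : (forall a, In a l -> f a = g a) -> lsum f l = lsum g l.
Proof. intros H; unfold lsum; now rewrite (map_ext_in f g l H). Qed.

Lemma lsum_le f g l : (forall a, In a l -> f a <= g a) -> lsum f l <= lsum g l.
Proof.
  induction l as [|a l IH]; intros H; [rewrite !lsum_nil; lra|].
  rewrite !lsum_cons; apply Rplus_le_compat; [apply H; now left|].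
  apply IH; intros; apply H; now right.
Qed.

Lemma lsum_const (k : R) l : lsum (fun _ => k) l = INR (length l) * k.
Proof.
  induction l as [|a l IH]; [rewrite lsum_nil; simpl; ring|].
  rewrite lsum_cons, IH; simpl length; rewrite S_INR; ring.
Qed.

Lemma lsum_nonneg f l : (forall a, In a l -> 0 <= f a) -> 0 <= lsum f l.
Proof.
  intros H; rewrite <- (Rmult_0_r (INR (length l))), <- lsum_const.
  now apply lsum_le.
Qed.

Lemma lsum_scal_l (k : R) f l : lsum (fun a => k * f a) l = k * lsum f l.
Proof. induction l as [|a l IH]; [rewrite !lsum_nil; ring|]. rewrite !lsum_cons, IH; ring. Qed.

Lemma lsum_plus f g l : lsum (fun a => f a + g a) l = lsum f l + lsum g l.
Proof. induction l as [|a l IH]; [rewrite !lsum_nil; ring|]. rewrite !lsum_cons, IH; ring. Qed.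

Lemma lsum_ge_term f l a : (forall b, In b l -> 0 <= f b) -> In a l -> f a <= lsum f l.
Proof.
  induction l as [|b l IH]; intros H Ha; [destruct Ha|]; rewrite lsum_cons.
  destruct Ha as [<-|Ha].
  - assert (0 <= lsum f l) by (apply lsum_nonneg; intros; apply H; now right). lra.
  - assert (0 <= f b) by (apply H; now left).
    assert (f a <= lsum f l) by (apply IH; auto; intros; apply H; now right). lra.
Qed.

End ListSums.

Lemma lsum_comm {A B : Type} (F : B -> A -> R) (k : list B) (l : list A) :
  lsum (fun a => lsum (fun b => F b a) k) l = lsum (fun b => lsum (F b) l) k.
Proof.
  induction k as [|b k IH].
  - rewrite (lsum_ext_in _ (fun _ => 0)) by reflexivity.
    rewrite lsum_const, lsum_nil; ring.
  - rewrite lsum_cons, <- IH, <- lsum_plus.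
    apply lsum_ext_in; intros a _; apply (lsum_cons (fun c => F c a)).
Qed.

Lemma fsum_S d f : fsum (S d) f = f 0%nat + fsum d (fun i => f (S i)).
Proof. unfold fsum; simpl; now rewrite <- seq_shift, map_map. Qed.

Lemma fsum_lsum d f : fsum d f = lsum f (seq 0 d).
Proof. reflexivity. Qed.

Lemma fsum_const d k : fsum d (fun _ => k) = INR d * k.
Proof. now rewrite fsum_lsum, lsum_const, length_seq. Qed.

Lemma fsum_scal d (k : R) f : fsum d (fun i => k * f i) = k * fsum d f.
Proof. apply lsum_scal_l. Qed.

Lemma fsum_le d f g : (forall i, (i < d)%nat -> f i <= g i) -> fsum d f <= fsum d g.
Proof. intros H; apply lsum_le; intros i Hi; apply in_seq in Hi; apply H; lia. Qed.

Lemma to_bool_cases (P : Prop) : (P /\ to_bool P = true) \/ (~ P /\ to_bool P = false).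
Proof. unfold to_bool; destruct excluded_middle_informative; auto. Qed.

Definition count {A : Type} (P : A -> Prop) (l : list A) : R :=
  lsum (fun a => if to_bool (P a) then 1 else 0) l.

Section Counting.
Context {A : Type}.
Implicit Types (P Q : A -> Prop) (l : list A).

Lemma count_le P Q l : (forall a, In a l -> P a -> Q a) -> count P l <= count Q l.
Proof.
  intros H; apply lsum_le; intros a Ha.
  destruct (to_bool_cases (P a)) as [[HP ->]|[_ ->]];
    destruct (to_bool_cases (Q a)) as [[_ ->]|[HQ ->]]; try lra.
  exfalso; auto.
Qed.

Lemma count_or P Q l : count (fun a => P a \/ Q a) l <= count P l + count Q l.
Proof.
  unfold count; rewrite <- lsum_plus; apply lsum_le; intros a _.
  destruct (to_bool_cases (P a \/ Q a)) as [[HPQ ->]|[_ ->]];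
    destruct (to_bool_cases (P a)) as [[HP ->]|[HP ->]];
    destruct (to_bool_cases (Q a)) as [[HQ ->]|[HQ ->]]; try lra; tauto.
Qed.

Lemma count_compl P l : count P l + count (fun a => ~ P a) l = INR (length l).
Proof.
  unfold count; rewrite <- lsum_plus, <- (Rmult_1_r (INR _)), <- lsum_const.
  apply lsum_ext_in; intros a _.
  destruct (to_bool_cases (P a)) as [[HP ->]|[HP ->]];
    destruct (to_bool_cases (~ P a)) as [[HnP ->]|[HnP ->]]; try lra; tauto.
Qed.

Lemma count_exists (n : nat) (P : nat -> A -> Prop) l :
  count (fun a => exists i, (i < n)%nat /\ P i a) l <= fsum n (fun i => count (P i) l).
Proof.
  unfold count; rewrite fsum_lsum, <- lsum_comm; apply lsum_le; intros a _.
  destruct (to_bool_cases (exists i, (i < n)%nat /\ P i a)) as [[[i [Hi HP]] ->]|[_ ->]].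
  - set (ind := fun j => if to_bool (P j a) then 1 else 0).
    apply Rle_trans with (ind i).
    + unfold ind; destruct (to_bool_cases (P i a)) as [[_ ->]|[HnP _]]; [lra | tauto].
    + apply lsum_ge_term; [intros; unfold ind; destruct to_bool; lra|].
      apply in_seq; lia.
  - apply lsum_nonneg; intros; destruct to_bool; lra.
Qed.

Lemma count_false P l : (forall a, In a l -> ~ P a) -> count P l = 0.
Proof.
  intros H; unfold count; transitivity (lsum (fun _ => 0) l); [|rewrite lsum_const; ring].
  apply lsum_ext_in; intros a Ha.
  destruct (to_bool_cases (P a)) as [[HP _]|[_ ->]]; [exfalso; eapply H; eauto | reflexivity].
Qed.

Lemma count_markov (X : A -> R) (T : R) l :
  0 < T -> (forall a, In a l -> 0 <= X a) -> T * count (fun a => T <= X a) l <= lsum X l.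
Proof.
  intros HT HX; unfold count; rewrite <- lsum_scal_l; apply lsum_le; intros a Ha.
  specialize (HX a Ha).
  destruct (to_bool_cases (T <= X a)) as [[HTX ->]|[_ ->]]; lra.
Qed.

Lemma count_le_lsum_exp (G : A -> R) (s : R) l :
  count (fun a => s <= G a) l <= lsum (fun a => exp (G a - s)) l.
Proof.
  apply lsum_le; intros a _.
  assert (H0 := exp_pos (G a - s)).
  destruct (to_bool_cases (s <= G a)) as [[Hs ->]|[_ ->]]; [|lra].
  rewrite <- exp_0; apply exp_le_compat; lra.
Qed.

End Counting.

Lemma length_filter_lsum {A : Type} (p : A -> bool) (l : list A) :
  INR (length (filter p l)) = lsum (fun a => if p a then 1 else 0) l.
Proof.
  induction l as [|a l IH]; [reflexivity|].
  rewrite lsum_cons; simpl; destruct (p a); simpl length; rewrite ?S_INR, IH; ring.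
Qed.

Lemma PrH_count d P : PrH d P = count P (half_subsets d) / INR (length (half_subsets d)).
Proof. unfold PrH, count; now rewrite length_filter_lsum. Qed.

Definition subsets (N m : nat) : list (list bool) :=
  filter (fun h => Nat.eqb (card_true h) m) (bool_lists N).

Lemma half_subsets_subsets d : half_subsets d = subsets d (d / 2).
Proof. reflexivity. Qed.

Lemma card_true_cons b h : card_true (b :: h) = ((if b then 1 else 0) + card_true h)%nat.
Proof. now destruct b. Qed.

Lemma subsets_O_r N : subsets (S N) 0 = map (cons false) (subsets N 0).
Proof.
  unfold subsets; simpl bool_lists.
  rewrite filter_app, !filter_map_swap, (filter_ext _ (fun _ => false)), filter_false;
    [reflexivity | now intros h].
Qed.

Lemma subsets_S_S N m :
  subsets (S N) (S m) = map (cons true) (subsets N m) ++ map (cons false) (subsets N (S m)).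
Proof. unfold subsets; simpl bool_lists; now rewrite filter_app, !filter_map_swap. Qed.

Lemma subsets_O_l m : subsets 0 m = if Nat.eqb m 0 then [[]] else [].
Proof. now destruct m. Qed.

Lemma In_subsets N m h : In h (subsets N m) -> length h = N /\ card_true h = m.
Proof.
  unfold subsets; rewrite filter_In; intros [Hh Hc]; split; [|now apply Nat.eqb_eq].
  clear Hc; revert h Hh; induction N as [|N IH]; simpl; intros h Hh.
  - now destruct Hh as [<-|[]].
  - apply in_app_or in Hh.
    destruct Hh as [Hh|Hh]; apply in_map_iff in Hh; destruct Hh as [h' [<- Hh]];
      simpl; f_equal; auto.
Qed.

Lemma C_n_0 n : C n 0 = 1.
Proof. unfold C; rewrite Nat.sub_0_r; simpl INR; field; apply INR_fact_neq_0. Qed.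

Lemma C_n_n n : C n n = 1.
Proof. unfold C; rewrite Nat.sub_diag; simpl INR; field; apply INR_fact_neq_0. Qed.

Lemma length_subsets N m : INR (length (subsets N m)) = if Nat.leb m N then C N m else 0.
Proof.
  revert m; induction N as [|N IH]; intros m.
  - rewrite subsets_O_l; destruct m; simpl; [now rewrite C_n_0 | reflexivity].
  - destruct m as [|m].
    + now rewrite subsets_O_r, length_map, IH, !C_n_0.
    + rewrite subsets_S_S, length_app, !length_map, plus_INR, !IH.
      destruct (lt_eq_lt_dec m N) as [[Hlt|<-]|Hgt].
      * rewrite (proj2 (Nat.leb_le m N)), (proj2 (Nat.leb_le (S m) N)),
          (proj2 (Nat.leb_le (S m) (S N))) by lia.
        now apply pascal.
      * rewrite Nat.leb_refl, (proj2 (Nat.leb_gt (S m) m)), (proj2 (Nat.leb_le (S m) (S m)))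
          by lia.
        rewrite !C_n_n; ring.
      * rewrite (proj2 (Nat.leb_gt m N)), (proj2 (Nat.leb_gt (S m) N)),
          (proj2 (Nat.leb_gt (S m) (S N))) by lia.
        ring.
Qed.

Lemma length_subsets_absorb N m :
  INR (S N) * INR (length (subsets N m)) = INR (S m) * INR (length (subsets (S N) (S m))).
Proof.
  rewrite !length_subsets; simpl Nat.leb.
  destruct (Nat.leb_spec m N) as [Hle|Hgt]; [|ring].
  unfold C; replace (S N - S m)%nat with (N - m)%nat by lia.
  rewrite !fact_simpl, !mult_INR.
  assert (INR (S m) <> 0) by (apply not_0_INR; lia).
  field; repeat split; auto using INR_fact_neq_0.
Qed.

Definition subset_sum (h : list bool) (c : nat -> R) : R :=
  fsum (length h) (fun x => if memH h x then c x else 0).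

Lemma subset_sum_cons b h c :
  subset_sum (b :: h) c = (if b then c 0%nat else 0) + subset_sum h (fun i => c (S i)).
Proof. unfold subset_sum; simpl length; now rewrite fsum_S. Qed.

Lemma subset_sum_scal h (k : R) c : subset_sum h (fun x => k * c x) = k * subset_sum h c.
Proof.
  unfold subset_sum; rewrite !fsum_lsum, <- lsum_scal_l.
  apply lsum_ext_in; intros x _; destruct memH; ring.
Qed.

Lemma subset_sum_nonneg h c : (forall x, (x < length h)%nat -> 0 <= c x) -> 0 <= subset_sum h c.
Proof.
  intros Hc; unfold subset_sum; rewrite fsum_lsum; apply lsum_nonneg; intros x Hx.
  apply in_seq in Hx; destruct memH; [apply Hc; lia | lra].
Qed.

Lemma subset_sum_le_card h c K :
  (forall x, (x < length h)%nat -> c x <= K) -> subset_sum h c <= INR (card_true h) * K.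
Proof.
  revert c; induction h as [|b h IH]; intros c Hc.
  { unfold subset_sum, card_true, fsum; simpl; lra. }
  rewrite subset_sum_cons, card_true_cons, plus_INR.
  assert (subset_sum h (fun i => c (S i)) <= INR (card_true h) * K)
    by (apply IH; intros; apply Hc; simpl; lia).
  assert (c 0%nat <= K) by (apply Hc; simpl; lia).
  destruct b; simpl INR; lra.
Qed.

Lemma MVT_everywhere (f df : R -> R) (a b : R) :
  (forall x, is_derive f x (df x)) ->
  exists c, Rmin a b <= c <= Rmax a b /\ f b - f a = df c * (b - a).
Proof.
  intros Hd; apply MVT_gen; intros x _; [apply Hd|].
  apply continuity_pt_filterlim, (ex_derive_continuous (V := R_NormedModule)).
  eexists; apply Hd.
Qed.

(* [tilt p] is the derivative of the cumulant generating function
   [u |-> ln (1 - p + p e^u)] of a Bernoulli(p) variable. *)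
Definition tilt (p u : R) : R := p * exp u / (1 - p + p * exp u).

Section Hoeffding.
Variable p : R.
Hypothesis Hp : 0 <= p <= 1.

Lemma bernoulli_mgf_pos u : 0 < 1 - p + p * exp u.
Proof.
  assert (He := exp_pos u).
  destruct (Req_dec p 1) as [->|Hne]; [lra|].
  assert (0 <= p * exp u) by (apply Rmult_le_pos; lra). lra.
Qed.

Lemma is_derive_tilt u : is_derive (tilt p) u (tilt p u * (1 - tilt p u)).
Proof.
  assert (H := bernoulli_mgf_pos u); unfold tilt.
  auto_derive; [lra | field; lra].
Qed.

Lemma tilt_bounds u : 0 <= tilt p u <= 1.
Proof.
  assert (H := bernoulli_mgf_pos u); assert (He := exp_pos u); unfold tilt.
  split.
  - apply Rdiv_le_0_compat; [apply Rmult_le_pos|]; lra.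
  - apply Rmult_le_reg_r with (1 - p + p * exp u); [lra|].
    field_simplify; lra.
Qed.

(* Since the tilt has derivative [q (1 - q) <= 1/4], it moves at most [|u|/4] away from [p]. *)
Lemma tilt_sub u : exists k, 0 <= k <= 1/4 /\ tilt p u - p = k * u.
Proof.
  destruct (MVT_everywhere (tilt p) (fun x => tilt p x * (1 - tilt p x)) 0 u is_derive_tilt)
    as [c [_ Hc]].
  exists (tilt p c * (1 - tilt p c)).
  assert (Hq := tilt_bounds c); assert (Hsq := pow2_ge_0 (tilt p c - 1/2)).
  split; [split; nra|].
  assert (H0 : tilt p 0 = p) by (unfold tilt; rewrite exp_0; field; lra).
  rewrite <- H0 at 2; rewrite Hc; ring.
Qed.

Lemma hoeffding_bernoulli u : exp (- p * u) * (1 - p + p * exp u) <= exp (u ^ 2 / 8).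
Proof.
  set (g := fun x => x ^ 2 / 8 + p * x - ln (1 - p + p * exp x)).
  assert (Hd : forall x, is_derive g x (x / 4 + p - tilt p x)).
  { intros x; assert (H := bernoulli_mgf_pos x); unfold g, tilt.
    auto_derive; [lra | field; lra]. }
  destruct (MVT_everywhere g _ 0 u Hd) as [c [Hc Hgu]].
  destruct (tilt_sub c) as [k [Hk Htc]].
  assert (Hcu : 0 <= c * u).
  { destruct (Rle_dec 0 u).
    - rewrite Rmin_left, Rmax_right in Hc by lra; nra.
    - rewrite Rmin_right, Rmax_left in Hc by lra; nra. }
  assert (Hg0 : g 0 = 0).
  { unfold g; cbv beta; rewrite exp_0; replace (1 - p + p * 1) with 1 by ring.
    rewrite ln_1; simpl; lra. }
  assert (Hgu_nonneg : 0 <= g u).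
  { replace (g u) with (c * u * (1/4 - k)) by (rewrite <- (Rminus_0_r (g u)), <- Hg0, Hgu; nra).
    apply Rmult_le_pos; lra. }
  assert (H := bernoulli_mgf_pos u).
  rewrite <- (exp_ln (1 - p + p * exp u)) at 1 by lra.
  rewrite <- exp_plus; apply exp_le_compat; unfold g in Hgu_nonneg; lra.
Qed.

End Hoeffding.

Lemma hoeffding_weighted (A B a b lam D : R) :
  0 <= A -> 0 <= B -> A * a + B * b = 0 -> (a - b) ^ 2 <= D ^ 2 ->
  A * exp (lam * a) + B * exp (lam * b) <= (A + B) * exp (lam ^ 2 * D ^ 2 / 8).
Proof.
  intros HA HB Hmean HD.
  assert (Hq := exp_pos (lam ^ 2 * D ^ 2 / 8)).
  destruct (Req_dec (A + B) 0) as [H0|H0].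
  { replace A with 0 by lra; replace B with 0 by lra; lra. }
  set (p := A / (A + B)).
  assert (Hp : 0 <= p <= 1).
  { unfold p; split; [apply Rdiv_le_0_compat; lra|].
    apply Rmult_le_reg_r with (A + B); [lra|]; field_simplify; lra. }
  assert (Hb : lam * b = - p * (lam * (a - b))).
  { apply Rmult_eq_reg_l with (A + B); [|lra].
    replace ((A + B) * (- p * (lam * (a - b)))) with (- A * (lam * (a - b)))
      by (unfold p; field; lra).
    transitivity (lam * (A * a + B * b) - A * (lam * (a - b))); [ring|].
    rewrite Hmean; ring. }
  replace (A * exp (lam * a) + B * exp (lam * b))
    with ((A + B) * (exp (- p * (lam * (a - b))) * (1 - p + p * exp (lam * (a - b)))))
    by (rewrite <- Hb; replace (lam * a) with (lam * b + lam * (a - b)) by ring;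
        rewrite exp_plus; unfold p; field; lra).
  apply Rmult_le_compat_l; [lra|].
  eapply Rle_trans; [apply hoeffding_bernoulli; exact Hp|].
  apply exp_le_compat.
  replace ((lam * (a - b)) ^ 2) with (lam ^ 2 * (a - b) ^ 2) by ring.
  assert (0 <= lam ^ 2) by apply pow2_ge_0. nra.
Qed.

Lemma exists_mean N c lo hi :
  lo <= hi -> (forall i, (i < N)%nat -> lo <= c i <= hi) ->
  exists mu, INR N * mu = fsum N c /\ lo <= mu <= hi.
Proof.
  intros Hlh Hc; destruct (Nat.eq_dec N 0) as [->|HN].
  { exists lo; split; [unfold fsum; simpl; ring | lra]. }
  assert (HNp : 0 < INR N) by (apply lt_0_INR; lia).
  assert (Hlo : INR N * lo <= fsum N c).
  { rewrite <- fsum_const; apply fsum_le; apply Hc. }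
  assert (Hhi : fsum N c <= INR N * hi).
  { rewrite <- fsum_const; apply fsum_le; apply Hc. }
  exists (fsum N c / INR N); split; [field; lra|].
  split; apply Rmult_le_reg_l with (INR N); try lra;
    replace (INR N * (fsum N c / INR N)) with (fsum N c) by (field; lra); lra.
Qed.

(* Conditioned on whether [0] belongs to a uniform [(m+1)]-subset of [0..N], its centred sum
   is shifted by one of these two amounts; weighted by the conditional probabilities, the
   shifts cancel. *)
Lemma subsets_shift_balance N m c0 mu mu' :
  INR (S N) * mu = c0 + INR N * mu' ->
  INR (length (subsets N m)) * (c0 + INR m * mu' - INR (S m) * mu)
  + INR (length (subsets N (S m))) * (INR (S m) * (mu' - mu)) = 0.
Proof.
  intros Hsplit.
  assert (Habs := length_subsets_absorb N m).
  rewrite subsets_S_S, length_app, !length_map, plus_INR in Habs.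
  set (A := INR (length (subsets N m))) in *; set (B := INR (length (subsets N (S m)))) in *.
  transitivity (mu' * (INR (S m) * (A + B) - INR (S N) * A) + A * c0 + A * INR N * mu'
                - INR (S m) * (A + B) * mu); [rewrite !S_INR; ring|].
  rewrite <- Habs.
  replace (INR (S N) * A * mu) with (A * (INR (S N) * mu)) by ring.
  rewrite Hsplit; ring.
Qed.

(* Induction on [N], conditioning on whether [0] belongs to the subset: by
   [subsets_shift_balance] and [hoeffding_weighted] each step costs a factor
   [exp (lam^2 D^2 / 8)]. *)
Lemma subset_sum_mgf N c m lam lo D mu :
  0 <= D -> (forall i, (i < N)%nat -> lo <= c i <= lo + D) -> INR N * mu = fsum N c ->
  lsum (fun h => exp (lam * (subset_sum h c - INR m * mu))) (subsets N m)
  <= INR (length (subsets N m)) * exp (lam ^ 2 * D ^ 2 * INR N / 8).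
Proof.
  revert c m mu; induction N as [|N IH]; intros c m mu HD Hc Hmu.
  { rewrite subsets_O_l; destruct m; cbn [Nat.eqb]; [|rewrite lsum_nil; simpl; lra].
    rewrite lsum_cons, lsum_nil, Rplus_0_r.
    replace (subset_sum [] c) with 0 by reflexivity.
    replace (lam * (0 - INR 0 * mu)) with 0 by (simpl; ring).
    replace (lam ^ 2 * D ^ 2 * INR 0 / 8) with 0 by (simpl; field).
    rewrite exp_0; simpl; lra. }
  set (c' := fun i => c (S i)).
  assert (Hc' : forall i, (i < N)%nat -> lo <= c' i <= lo + D) by (intros; apply Hc; lia).
  destruct (exists_mean N c' lo (lo + D) ltac:(lra) Hc') as [mu' [Hmu' Hmu'_bounds]].
  set (E := exp (lam ^ 2 * D ^ 2 * INR N / 8)).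
  set (q := exp (lam ^ 2 * D ^ 2 / 8)).
  assert (HE : exp (lam ^ 2 * D ^ 2 * INR (S N) / 8) = q * E)
    by (unfold q, E; rewrite <- exp_plus, S_INR; f_equal; field).
  assert (Hq : 1 <= q).
  { rewrite <- exp_0; apply exp_le_compat.
    assert (0 <= lam ^ 2 * D ^ 2) by (apply Rmult_le_pos; apply pow2_ge_0). lra. }
  assert (HEpos := exp_pos (lam ^ 2 * D ^ 2 * INR N / 8)); fold E in HEpos.
  rewrite HE.
  destruct m as [|m].
  { rewrite subsets_O_r, lsum_map, length_map.
    rewrite (lsum_ext_in _ (fun h => exp (lam * (subset_sum h c' - INR 0 * mu'))))
      by (intros h _; rewrite subset_sum_cons; fold c'; simpl INR; f_equal; ring).
    eapply Rle_trans; [apply (IH c' 0%nat mu'); auto|]; fold E.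
    apply Rmult_le_compat_l; [apply pos_INR | nra]. }
  set (A := INR (length (subsets N m))).
  set (B := INR (length (subsets N (S m)))).
  set (a := c 0%nat + INR m * mu' - INR (S m) * mu).
  set (b := INR (S m) * (mu' - mu)).
  rewrite subsets_S_S, lsum_app, !lsum_map, length_app, !length_map, plus_INR; fold A B.
  rewrite (lsum_ext_in _ (fun h => exp (lam * a) * exp (lam * (subset_sum h c' - INR m * mu')))
             (subsets N m))
    by (intros h _; cbv beta; rewrite <- exp_plus, subset_sum_cons; fold c'; f_equal;
        unfold a; ring).
  rewrite (lsum_ext_in _ (fun h => exp (lam * b) * exp (lam * (subset_sum h c' - INR (S m) * mu')))
             (subsets N (S m)))
    by (intros h _; cbv beta; rewrite <- exp_plus, subset_sum_cons; fold c'; f_equal;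
        unfold b; ring).
  rewrite !lsum_scal_l.
  assert (Hmean : A * a + B * b = 0).
  { apply subsets_shift_balance.
    rewrite Hmu, Hmu', fsum_S; reflexivity. }
  assert (Hgap : (a - b) ^ 2 <= D ^ 2).
  { replace (a - b) with (c 0%nat - mu') by (unfold a, b; rewrite S_INR; ring).
    assert (Hc0 := Hc 0%nat ltac:(lia)). nra. }
  assert (Hw := hoeffding_weighted A B a b lam D (pos_INR _) (pos_INR _) Hmean Hgap); fold q in Hw.
  assert (IH1 := IH c' m mu' HD Hc' Hmu'); fold A E in IH1.
  assert (IH2 := IH c' (S m) mu' HD Hc' Hmu'); fold B E in IH2.
  assert (Hea := exp_pos (lam * a)); assert (Heb := exp_pos (lam * b)).
  apply Rle_trans with ((A * exp (lam * a) + B * exp (lam * b)) * E); [nra|].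
  replace ((A + B) * (q * E)) with ((A + B) * q * E) by ring.
  apply Rmult_le_compat_r; lra.
Qed.

Lemma subset_sum_tail N c m lo D mu t :
  0 < D -> (0 < N)%nat -> 0 <= t ->
  (forall i, (i < N)%nat -> lo <= c i <= lo + D) -> INR N * mu = fsum N c ->
  count (fun h => t <= Rabs (subset_sum h c - INR m * mu)) (subsets N m)
  <= 2 * INR (length (subsets N m)) * exp (- 2 * t ^ 2 / (D ^ 2 * INR N)).
Proof.
  intros HD HN Ht Hc Hmu.
  assert (HNr : 0 < INR N) by (apply lt_0_INR; lia).
  assert (HDN : 0 < D ^ 2 * INR N) by (apply Rmult_lt_0_compat; [apply pow_lt|]; lra).
  set (lam := 4 * t / (D ^ 2 * INR N)).
  assert (Hlam : 0 <= lam) by (apply Rdiv_le_0_compat; lra).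
  set (X := fun h => subset_sum h c - INR m * mu).
  set (L := subsets N m).
  assert (Hexp : forall l, l ^ 2 = lam ^ 2 ->
    lsum (fun h => exp (l * X h - lam * t)) L
    <= INR (length L) * exp (- 2 * t ^ 2 / (D ^ 2 * INR N))).
  { intros l Hl.
    rewrite (lsum_ext_in _ (fun h => exp (- (lam * t)) * exp (l * X h)))
      by (intros; rewrite <- exp_plus; f_equal; ring).
    rewrite lsum_scal_l.
    assert (Hmgf := subset_sum_mgf N c m l lo D mu (Rlt_le _ _ HD) Hc Hmu).
    rewrite Hl in Hmgf.
    assert (Hrate : - (lam * t) + lam ^ 2 * D ^ 2 * INR N / 8 = - 2 * t ^ 2 / (D ^ 2 * INR N))
      by (unfold lam; field; lra).
    rewrite <- Hrate, exp_plus.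
    assert (He := exp_pos (- (lam * t))).
    replace (INR (length L) * (exp (- (lam * t)) * exp (lam ^ 2 * D ^ 2 * INR N / 8)))
      with (exp (- (lam * t)) * (INR (length L) * exp (lam ^ 2 * D ^ 2 * INR N / 8))) by ring.
    apply Rmult_le_compat_l; [lra | exact Hmgf]. }
  apply Rle_trans with
    (count (fun h => lam * t <= lam * X h) L + count (fun h => lam * t <= - lam * X h) L).
  - eapply Rle_trans; [|apply count_or].
    apply count_le; intros h _ Habs; fold (X h) in Habs.
    unfold Rabs in Habs; destruct Rcase_abs; [right | left]; nra.
  - assert (H1 := count_le_lsum_exp (fun h => lam * X h) (lam * t) L).
    assert (H2 := count_le_lsum_exp (fun h => - lam * X h) (lam * t) L).
    assert (E1 := Hexp lam eq_refl).
    assert (E2 := Hexp (- lam) ltac:(ring)).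
    cbv beta in H1, H2; lra.
Qed.

Lemma exists_argmin (f : nat -> R) d :
  (0 < d)%nat -> exists x0, (x0 < d)%nat /\ forall x, (x < d)%nat -> f x0 <= f x.
Proof.
  induction d as [|d IH]; intros Hd; [lia|].
  destruct (Nat.eq_dec d 0) as [->|Hd0].
  { exists 0%nat; split; [lia|]; intros x Hx; replace x with 0%nat by lia; lra. }
  destruct (IH ltac:(lia)) as [x0 [Hx0 Hmin]].
  destruct (Rle_dec (f x0) (f d)).
  - exists x0; split; [lia|]; intros x Hx.
    destruct (Nat.eq_dec x d) as [->|]; [assumption | apply Hmin; lia].
  - exists d; split; [lia|]; intros x Hx.
    destruct (Nat.eq_dec x d) as [->|]; [lra|]; specialize (Hmin x ltac:(lia)); lra.
Qed.

(* Pointwise [eps]-privacy confines weights of mean [1] to an interval of width [e^eps - 1]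
   (above their minimum, which is at most [1]). *)
Lemma private_weights_range d (w : nat -> R) eps :
  (0 < d)%nat -> 0 <= eps ->
  (forall x, (x < d)%nat -> 0 <= w x) ->
  (forall x x', (x < d)%nat -> (x' < d)%nat -> w x <= exp eps * w x') ->
  fsum d w = INR d ->
  exists lo, forall x, (x < d)%nat -> lo <= w x <= lo + (exp eps - 1).
Proof.
  intros Hd Heps Hnn Hpriv Hsum.
  destruct (exists_argmin w d Hd) as [x0 [Hx0 Hmin]].
  assert (Hlo1 : w x0 <= 1).
  { assert (H := fsum_le d (fun _ => w x0) w Hmin); rewrite fsum_const, Hsum in H.
    assert (0 < INR d) by (apply lt_0_INR; lia). nra. }
  assert (He : 1 <= exp eps) by (rewrite <- exp_0; now apply exp_le_compat).
  assert (Hw0 := Hnn x0 Hx0).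
  exists (w x0); intros x Hx; split; [now apply Hmin|].
  assert (H := Hpriv x x0 Hx Hx0). nra.
Qed.

Lemma Rabs_sub_1_ge_of_Rabs_ln r v :
  0 < v <= 1 -> 0 <= r -> (r = 0 \/ Rabs (ln r) > v) -> v / 2 <= Rabs (r - 1).
Proof.
  intros Hv Hr [->|Hln]; [rewrite Rminus_0_l, Rabs_Ropp, Rabs_R1; lra|].
  assert (Hr0 : 0 < r).
  { destruct Hr as [|<-]; [assumption|].
    (* Stdlib's [ln] is [0] at [0]. *)
    unfold ln in Hln; destruct (Rlt_dec 0 0); [lra|]. rewrite Rabs_R0 in Hln; lra. }
  assert (He := exp_ineq1_le v).
  unfold Rabs in Hln; destruct (Rcase_abs (ln r)).
  - assert (Hlt : r < exp (- v)) by (rewrite <- (exp_ln r) by lra; apply exp_increasing; lra).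
    assert (Hinv : exp (- v) * (1 + v) <= 1).
    { rewrite exp_Ropp; apply Rmult_le_reg_l with (exp v); [apply exp_pos|].
      rewrite <- Rmult_assoc, Rinv_r by (apply Rgt_not_eq, exp_pos); lra. }
    rewrite Rabs_left1; nra.
  - assert (Hgt : exp v < r) by (rewrite <- (exp_ln r) by lra; apply exp_increasing; lra).
    rewrite Rabs_right; lra.
Qed.

Definition leak_threshold (eps beta : R) (d : nat) : R :=
  (exp (2 * eps) - 1) * sqrt (4 / INR d * ln (2 / beta)).

Section Threshold.
Variables (eps beta : R) (d : nat).
Hypothesis Heps : 0 < eps.
Hypothesis Hbeta : 0 < beta < 1.
Hypothesis Hd : INR d > 4 * (exp (2 * eps) - 1) ^ 2 * ln (2 / beta).

Let v := leak_threshold eps beta d.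

Lemma ln_2_div_pos : 0 < ln (2 / beta).
Proof.
  rewrite <- ln_1; apply ln_increasing; [lra|].
  apply Rmult_lt_reg_r with beta; [lra|]; field_simplify; lra.
Qed.

Lemma dim_pos : 0 < INR d.
Proof.
  assert (H := ln_2_div_pos); assert (He := exp_sub_1_pos (2 * eps) ltac:(lra)).
  assert (0 < (exp (2 * eps) - 1) ^ 2) by (apply pow_lt; lra). nra.
Qed.

Lemma leak_threshold_sqr : INR d * v ^ 2 = 4 * (exp (2 * eps) - 1) ^ 2 * ln (2 / beta).
Proof.
  assert (HL := ln_2_div_pos); assert (Hd0 := dim_pos).
  unfold v, leak_threshold; rewrite Rpow_mult_distr, pow2_sqrt.
  - field; lra.
  - apply Rmult_le_pos; [apply Rdiv_le_0_compat|]; lra.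
Qed.

Lemma leak_threshold_bounds : 0 < v < 1.
Proof.
  assert (HL := ln_2_div_pos); assert (He := exp_sub_1_pos (2 * eps) ltac:(lra)).
  assert (Hd0 := dim_pos); assert (Hsq := leak_threshold_sqr).
  assert (Hv : 0 < v).
  { apply Rmult_lt_0_compat; [lra|]; apply sqrt_lt_R0.
    apply Rmult_lt_0_compat; [apply Rdiv_lt_0_compat|]; lra. }
  split; [assumption|].
  assert (v ^ 2 < 1) by (apply Rmult_lt_reg_l with (INR d); lra). nra.
Qed.

(* With [D = e^eps - 1] we have [e^(2 eps) - 1 = D (D + 2)], so the Hoeffding exponent
   [2 t^2 / (D^2 d)] at [t = d v / 4] is [(D + 2)^2 ln (2/beta) / 2 >= 2 ln (2/beta)]. *)
Lemma leak_tail_exponent :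
  exp (- 2 * (INR d * v / 4) ^ 2 / ((exp eps - 1) ^ 2 * INR d)) <= (beta / 2) ^ 2.
Proof.
  assert (HL := ln_2_div_pos); assert (Hd0 := dim_pos).
  assert (Hsq := leak_threshold_sqr).
  set (D := exp eps - 1).
  assert (HD : 0 < D).
  { now apply exp_sub_1_pos. }
  assert (H2e : exp (2 * eps) - 1 = D * (D + 2)).
  { replace (2 * eps) with (eps + eps) by ring; rewrite exp_plus; unfold D; ring. }
  assert (Hexponent : 2 * (INR d * v / 4) ^ 2 / (D ^ 2 * INR d) = (D + 2) ^ 2 * ln (2 / beta) / 2).
  { assert (HD2 : 0 < D ^ 2) by (apply pow_lt; lra).
    apply Rmult_eq_reg_l with (8 * D ^ 2); [|apply Rgt_not_eq, Rmult_lt_0_compat; lra].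
    replace (8 * D ^ 2 * (2 * (INR d * v / 4) ^ 2 / (D ^ 2 * INR d))) with (INR d * v ^ 2)
      by (field; split; lra).
    rewrite Hsq, H2e; field. }
  replace ((beta / 2) ^ 2) with (exp (- 2 * ln (2 / beta))).
  - apply exp_le_compat.
    replace (- 2 * (INR d * v / 4) ^ 2 / (D ^ 2 * INR d))
      with (- (2 * (INR d * v / 4) ^ 2 / (D ^ 2 * INR d))) by (field; split; lra).
    rewrite Hexponent; nra.
  - replace (- 2 * ln (2 / beta)) with (- ln (2 / beta) + - ln (2 / beta)) by ring.
    rewrite exp_plus, exp_Ropp, exp_ln by (apply Rdiv_lt_0_compat; lra); field; lra.
Qed.

End Threshold.

Lemma pUH_subset_sum d Rz h y :
  length h = d -> pUH d Rz h y = / INR (card_true h) * subset_sum h (fun x => Rz x y).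
Proof. intros <-; reflexivity. Qed.

Lemma leaky_deviation d v Rz y h :
  0 < v <= 1 -> length h = d -> (0 < card_true h)%nat ->
  (forall x, (x < d)%nat -> 0 <= Rz x y) ->
  leaky d v h Rz y ->
  INR (card_true h) * v / 2
  <= Rabs (subset_sum h (fun x => Rz x y / pU d Rz y) - INR (card_true h)).
Proof.
  intros Hv Hlen Hcard Hnn [HP Hleak].
  set (k := INR (card_true h)).
  assert (Hk : 0 < k) by (apply lt_0_INR; lia).
  set (S := subset_sum h (fun x => Rz x y / pU d Rz y)).
  assert (HS : subset_sum h (fun x => Rz x y) = pU d Rz y * S).
  { unfold S; rewrite <- subset_sum_scal; f_equal; apply functional_extensionality.
    intros x; field; lra. }
  assert (HSnn : 0 <= S).
  { apply subset_sum_nonneg; intros x Hx; apply Rdiv_le_0_compat; [apply Hnn; lia | lra]. }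
  rewrite pUH_subset_sum, HS in Hleak by assumption; fold k in Hleak.
  assert (Hratio : / k * (pU d Rz y * S) / pU d Rz y = S / k) by (field; lra).
  assert (Hr := Rabs_sub_1_ge_of_Rabs_ln (S / k) v Hv
    ltac:(apply Rdiv_le_0_compat; lra)
    ltac:(rewrite <- Hratio; destruct Hleak as [H0|H];
          [left; rewrite H0; unfold Rdiv; ring | now right])).
  replace (S - k) with (k * (S / k - 1)) by (field; lra).
  rewrite Rabs_mult, Rabs_pos_eq by lra.
  replace (k * v / 2) with (k * (v / 2)) by field.
  apply Rmult_le_compat_l; lra.
Qed.

Lemma In_half_subsets d h :
  Nat.Even d -> In h (half_subsets d) -> length h = d /\ INR (card_true h) = INR d / 2.
Proof.
  intros [k ->] Hh; rewrite half_subsets_subsets in Hh.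
  apply In_subsets in Hh as [Hlen Hcard]; split; [assumption|].
  rewrite Hcard, Nat.mul_comm, Nat.div_mul, mult_INR by lia; simpl; field.
Qed.

Lemma message_weights d eps Rz y :
  (0 < d)%nat -> 0 <= eps -> 0 < pU d Rz y ->
  (forall x, (x < d)%nat -> 0 <= Rz x y) ->
  (forall x x', (x < d)%nat -> (x' < d)%nat -> Rz x y <= exp eps * Rz x' y) ->
  let w := fun x => Rz x y / pU d Rz y in
  fsum d w = INR d * 1 /\ exists lo, forall x, (x < d)%nat -> lo <= w x <= lo + (exp eps - 1).
Proof.
  intros Hd Heps HP Hnn Hpriv w.
  assert (Hsum : fsum d w = INR d * 1).
  { replace w with (fun x => / pU d Rz y * Rz x y)
      by (apply functional_extensionality; intros x; unfold w, Rdiv; ring).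
    assert (HF : fsum d (fun x => Rz x y) = INR d * pU d Rz y)
      by (unfold pU; field; apply not_0_INR; lia).
    rewrite fsum_scal, HF; field; lra. }
  split; [assumption|].
  apply private_weights_range; auto.
  - intros x Hx; apply Rdiv_le_0_compat; auto.
  - intros x x' Hx Hx'; unfold w, Rdiv; rewrite <- Rmult_assoc.
    apply Rmult_le_compat_r; [apply Rlt_le, Rinv_0_lt_compat |]; auto.
  - rewrite Hsum; ring.
Qed.

Lemma count_leaky_le d eps beta Rz y :
  0 < eps -> 0 < beta < 1 -> Nat.Even d ->
  INR d > 4 * (exp (2 * eps) - 1) ^ 2 * ln (2 / beta) ->
  (forall x, (x < d)%nat -> 0 <= Rz x y) ->
  (forall x x', (x < d)%nat -> (x' < d)%nat -> Rz x y <= exp eps * Rz x' y) ->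
  count (fun h => leaky d (leak_threshold eps beta d) h Rz y) (half_subsets d)
  <= beta / 2 * INR (length (half_subsets d)).
Proof.
  intros Heps Hbeta Hev Hd Hnn Hpriv.
  set (v := leak_threshold eps beta d).
  assert (Hd0 := dim_pos eps beta d Heps Hbeta Hd).
  assert (Hdn : (0 < d)%nat) by (apply INR_lt; simpl; lra).
  assert (Hv := leak_threshold_bounds eps beta d Heps Hbeta Hd); fold v in Hv.
  assert (HN := pos_INR (length (half_subsets d))).
  destruct (Rle_dec (pU d Rz y) 0) as [HP|HP].
  { rewrite count_false; [apply Rmult_le_pos; lra|]. intros h _ [HP' _]; lra. }
  apply Rnot_le_lt in HP.
  destruct (message_weights d eps Rz y Hdn ltac:(lra) HP Hnn Hpriv) as [Hsum [lo Hrange]].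
  set (w := fun x => Rz x y / pU d Rz y) in *.
  set (t := INR d * v / 4).
  apply Rle_trans with
    (count (fun h => t <= Rabs (subset_sum h w - INR (d / 2) * 1)) (subsets d (d / 2))).
  - apply count_le; intros h Hh Hleak.
    destruct (In_half_subsets d h Hev Hh) as [Hlen Hcard].
    assert (Hc := leaky_deviation d v Rz y h ltac:(lra) Hlen
                    ltac:(apply INR_lt; simpl; lra) Hnn Hleak).
    apply In_subsets in Hh as [_ <-]; rewrite Hcard in *.
    unfold t; replace (INR d * v / 4) with (INR d / 2 * v / 2) by field.
    rewrite Rmult_1_r; exact Hc.
  - eapply Rle_trans.
    { apply (subset_sum_tail d w (d / 2) lo (exp eps - 1) 1 t); auto.
      + now apply exp_sub_1_pos.
      + unfold t; apply Rmult_le_pos; [apply Rmult_le_pos|]; lra. }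
    assert (Htail := leak_tail_exponent eps beta d Heps Hbeta Hd); fold v t in Htail.
    rewrite <- half_subsets_subsets.
    assert (Hb2 : 2 * (beta / 2) ^ 2 <= beta / 2) by nra.
    apply Rle_trans with (INR (length (half_subsets d)) * (2 * (beta / 2) ^ 2)); nra.
Qed.

Lemma Sum_is_series (f : nat -> R) (l : R) : is_series f l -> Sum f = l.
Proof.
  intros H; apply is_series_Reals in H; unfold Sum.
  apply (uniqueness_sum f); [|exact H].
  exact (epsilon_spec (inhabits 0) (fun l => infinite_sum f l) (ex_intro _ l H)).
Qed.

Lemma is_series_0 : is_series (fun _ : nat => 0) 0.
Proof.
  apply is_series_Reals; intros e He; exists 0%nat; intros N _.
  assert (Hz : sum_f_R0 (fun _ : nat => 0) N = 0) by (induction N; simpl; [|rewrite IHN]; ring).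
  unfold Rfunctions.R_dist; rewrite Hz, Rminus_diag, Rabs_R0; lra.
Qed.

Lemma ex_series_scal_R (c : R) (a : nat -> R) : ex_series a -> ex_series (fun n => c * a n).
Proof. apply (@ex_series_scal R_AbsRing R_NormedModule). Qed.

Lemma sum_f_R0_singleton (f : nat -> R) y N :
  sum_f_R0 (fun z => if Nat.eqb z y then f z else 0) N = if Nat.leb y N then f y else 0.
Proof.
  induction N as [|N IH]; cbn [sum_f_R0].
  - destruct (Nat.eqb_spec 0 y), (Nat.leb_spec y 0); subst; try lia; reflexivity.
  - rewrite IH; destruct (Nat.eqb_spec (S N) y), (Nat.leb_spec y N), (Nat.leb_spec y (S N));
      subst; try lia; ring.
Qed.

Lemma PrIn_singleton (p : nat -> R) y : PrIn p (fun z => Nat.eqb z y) = p y.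
Proof.
  unfold PrIn; apply Sum_is_series, is_series_Reals; intros e He; exists y; intros N HN.
  unfold Rfunctions.R_dist; rewrite sum_f_R0_singleton, (proj2 (Nat.leb_le y N)) by lia.
  rewrite Rminus_diag, Rabs_R0; lra.
Qed.

Lemma eps_private_pointwise d eps Rz x x' y :
  eps_private d eps Rz -> (x < d)%nat -> (x' < d)%nat -> Rz x y <= exp eps * Rz x' y.
Proof.
  intros Hpriv Hx Hx'; rewrite <- (PrIn_singleton (Rz x) y), <- (PrIn_singleton (Rz x') y).
  now apply Hpriv.
Qed.

Lemma is_series_fsum d (F : nat -> nat -> R) :
  (forall x, (x < d)%nat -> is_series (F x) 1) ->
  is_series (fun y => fsum d (fun x => F x y)) (INR d).
Proof.
  revert F; induction d as [|d IH]; intros F HF.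
  - apply (is_series_ext (fun _ => 0)); [reflexivity | apply is_series_0].
  - apply (is_series_ext (fun y => F 0%nat y + fsum d (fun x => F (S x) y))).
    { intros y; now rewrite fsum_S. }
    rewrite S_INR, Rplus_comm.
    apply (@is_series_plus R_AbsRing R_NormedModule); [apply HF; lia|].
    apply IH; intros; apply HF; lia.
Qed.

Lemma is_series_pU d Rz : (0 < d)%nat -> is_randomizer d Rz -> is_series (pU d Rz) 1.
Proof.
  intros Hd HR; unfold pU.
  replace 1 with (/ INR d * INR d) by (field; apply not_0_INR; lia).
  apply (@is_series_scal R_AbsRing R_NormedModule), is_series_fsum.
  intros x Hx; apply is_series_Reals, HR, Hx.
Qed.

Lemma pU_nonneg d Rz y : is_randomizer d Rz -> 0 <= pU d Rz y.
Proof.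
  intros HR; unfold pU; apply Rmult_le_pos.
  - destruct d; [simpl; rewrite Rinv_0; lra|].
    apply Rlt_le, Rinv_0_lt_compat, lt_0_INR; lia.
  - rewrite fsum_lsum; apply lsum_nonneg; intros x Hx; apply in_seq in Hx; apply HR; lia.
Qed.

Lemma pUH_le_pU d eps Rz h y :
  is_randomizer d Rz -> eps_private d eps Rz -> length h = d -> (0 < card_true h)%nat ->
  0 <= pUH d Rz h y <= exp eps * pU d Rz y.
Proof.
  intros HR Hpriv Hlen Hcard.
  assert (Hd : 0 < INR d).
  { apply lt_0_INR; rewrite <- Hlen; destruct h; [cbv in Hcard; lia | simpl; lia]. }
  assert (Hk : 0 < INR (card_true h)) by (apply lt_0_INR; lia).
  assert (Hx : forall x, (x < d)%nat -> Rz x y <= exp eps * pU d Rz y).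
  { intros x Hx.
    assert (H := fsum_le d (fun _ => Rz x y) (fun x' => exp eps * Rz x' y)
                   (fun x' Hx' => eps_private_pointwise d eps Rz x x' y Hpriv Hx Hx')).
    rewrite fsum_const, fsum_scal in H; unfold pU.
    apply Rmult_le_reg_l with (INR d); [lra|].
    replace (INR d * (exp eps * (/ INR d * fsum d (fun x0 => Rz x0 y))))
      with (exp eps * fsum d (fun x0 => Rz x0 y)) by (field; lra).
    exact H. }
  rewrite pUH_subset_sum by assumption; split.
  - apply Rmult_le_pos; [apply Rlt_le, Rinv_0_lt_compat; lra|].
    apply subset_sum_nonneg; intros x Hx'; apply HR; lia.
  - assert (Hs := subset_sum_le_card h (fun x => Rz x y) (exp eps * pU d Rz y)
                    ltac:(intros; apply Hx; lia)).
    apply Rmult_le_reg_l with (INR (card_true h)); [lra|].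
    rewrite <- Rmult_assoc, Rinv_r, Rmult_1_l by lra; exact Hs.
Qed.

Lemma lsum_Series {A : Type} (f : A -> nat -> R) (l : list A) :
  (forall a, In a l -> ex_series (f a)) ->
  ex_series (fun y => lsum (fun a => f a y) l) /\
  lsum (fun a => Series (f a)) l = Series (fun y => lsum (fun a => f a y) l).
Proof.
  induction l as [|a l IH]; intros Hex.
  - split; [exists 0; apply is_series_0 | symmetry; apply is_series_unique, is_series_0].
  - destruct (IH (fun b Hb => Hex b (or_intror Hb))) as [Hl Heq].
    assert (Ha := Hex a (or_introl eq_refl)).
    rewrite lsum_cons, Heq, <- Series_plus by assumption.
    split; [apply (@ex_series_plus R_AbsRing R_NormedModule); assumption | reflexivity].
Qed.

Section Averaging.
Variables (q : nat -> R) (M : R).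
Hypothesis Hq : is_series q 1.
Hypothesis Hq_nonneg : forall y, 0 <= q y.
Hypothesis HM : 0 <= M.

Lemma PrIn_Series (p : nat -> R) (S : nat -> bool) :
  (forall y, 0 <= p y <= M * q y) ->
  ex_series (fun y => if S y then p y else 0) /\
  PrIn p S = Series (fun y => if S y then p y else 0).
Proof.
  intros Hp.
  assert (Hex : ex_series (fun y => if S y then p y else 0)).
  { apply (ex_series_le (fun y => if S y then p y else 0) (fun y => M * q y));
      [|apply ex_series_scal_R; eexists; exact Hq].
    intros y; specialize (Hp y); rewrite Rabs_pos_eq; destruct (S y); lra. }
  split; [assumption|]; unfold PrIn; apply Sum_is_series, Series_correct, Hex.
Qed.

Lemma PrIn_nonneg (p : nat -> R) (S : nat -> bool) :
  (forall y, 0 <= p y <= M * q y) -> 0 <= PrIn p S.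
Proof.
  intros Hp; destruct (PrIn_Series p S Hp) as [Hex ->].
  apply Rle_trans with (Series (fun _ => 0));
    [right; symmetry; apply is_series_unique, is_series_0|].
  apply Series_le; [|assumption]; intros y; specialize (Hp y); destruct (S y); lra.
Qed.

Lemma lsum_PrIn_le {A : Type} (l : list A) (p : A -> nat -> R) (S : A -> nat -> bool) (K : R) :
  (forall a y, In a l -> 0 <= p a y <= M * q y) ->
  (forall y, lsum (fun a => if S a y then 1 else 0) l <= K) ->
  lsum (fun a => PrIn (p a) (S a)) l <= M * K.
Proof.
  intros Hp HK.
  set (g := fun a y => if S a y then p a y else 0).
  rewrite (lsum_ext_in _ (fun a => Series (g a))) by (intros a Ha; apply PrIn_Series; auto).
  destruct (lsum_Series g l (fun a Ha => proj1 (PrIn_Series (p a) (S a) (fun y => Hp a y Ha))))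
    as [Hex ->].
  rewrite <- (Rmult_1_r (M * K)), <- (is_series_unique _ _ Hq), <- Series_scal_l.
  apply Series_le; [|apply ex_series_scal_R; eexists; exact Hq].
  intros y; split.
  - apply lsum_nonneg; intros a Ha; unfold g; specialize (Hp a y Ha); destruct (S a y); lra.
  - apply Rle_trans with (M * q y * lsum (fun a => if S a y then 1 else 0) l).
    + rewrite <- lsum_scal_l; apply lsum_le; intros a Ha; unfold g.
      specialize (Hp a y Ha); destruct (S a y); lra.
    + replace (M * K * q y) with (M * q y * K) by ring.
      apply Rmult_le_compat_l; [apply Rmult_le_pos|]; auto.
Qed.

End Averaging.

Section LeakMass.
Variables (eps beta : R) (d : nat) (Rz : nat -> nat -> R).
Hypothesis Heps : 0 < eps.
Hypothesis Hbeta : 0 < beta < 1.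
Hypothesis Hev : Nat.Even d.
Hypothesis Hd : INR d > 4 * (exp (2 * eps) - 1) ^ 2 * ln (2 / beta).
Hypothesis HR : is_randomizer d Rz.
Hypothesis Hpriv : eps_private d eps Rz.

Let v := leak_threshold eps beta d.
Let N := INR (length (half_subsets d)).

Lemma dim_pos_nat : (0 < d)%nat.
Proof. apply INR_lt; simpl; apply (dim_pos eps beta d Heps Hbeta Hd). Qed.

Lemma count_Leak_le y :
  lsum (fun h => if Leak d v h Rz y then 1 else 0) (half_subsets d) <= beta / 2 * N.
Proof.
  apply (count_leaky_le d eps beta Rz y Heps Hbeta Hev Hd).
  - intros x Hx; apply HR, Hx.
  - intros x x' Hx Hx'; now apply (eps_private_pointwise d eps).
Qed.

Lemma pUH_le_pU_half h y :
  In h (half_subsets d) -> 0 <= pUH d Rz h y <= exp eps * pU d Rz y.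
Proof.
  intros Hh; destruct (In_half_subsets d h Hev Hh) as [Hlen Hcard].
  assert (Hd0 := dim_pos_nat).
  apply pUH_le_pU; auto.
  apply INR_lt; rewrite Hcard; simpl; apply lt_0_INR in Hd0; lra.
Qed.

Lemma expected_leak_mass_U :
  lsum (fun h => PrIn (pU d Rz) (Leak d v h Rz)) (half_subsets d) <= 1 * (beta / 2 * N).
Proof.
  apply (lsum_PrIn_le (pU d Rz) 1 (is_series_pU d Rz dim_pos_nat HR)
           (fun y => pU_nonneg d Rz y HR));
    [lra | | exact count_Leak_le].
  intros h y _; assert (H := pU_nonneg d Rz y HR); lra.
Qed.

Lemma expected_leak_mass_UH :
  lsum (fun h => PrIn (pUH d Rz h) (Leak d v h Rz)) (half_subsets d) <= exp eps * (beta / 2 * N).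
Proof.
  apply (lsum_PrIn_le (pU d Rz) (exp eps) (is_series_pU d Rz dim_pos_nat HR)
           (fun y => pU_nonneg d Rz y HR));
    [apply Rlt_le, exp_pos | | exact count_Leak_le].
  intros h y Hh; now apply pUH_le_pU_half.
Qed.

Lemma leak_mass_nonneg h :
  In h (half_subsets d) ->
  0 <= PrIn (pU d Rz) (Leak d v h Rz) /\ 0 <= PrIn (pUH d Rz h) (Leak d v h Rz).
Proof.
  intros Hh; assert (He := exp_pos eps).
  split; apply (PrIn_nonneg (pU d Rz) (exp eps) (is_series_pU d Rz dim_pos_nat HR)); intros y.
  - assert (H := pU_nonneg d Rz y HR); split; [lra|].
    rewrite <- (Rmult_1_l (pU d Rz y)) at 1; apply Rmult_le_compat_r; [lra|].
    rewrite <- exp_0; apply exp_le_compat; lra.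
  - now apply pUH_le_pU_half.
Qed.

End LeakMass.

Lemma length_half_subsets_pos d : 0 < INR (length (half_subsets d)).
Proof.
  assert (Hle : (d / 2 <= d)%nat) by (apply Nat.Div0.div_le_upper_bound; lia).
  rewrite half_subsets_subsets, length_subsets, (proj2 (Nat.leb_le _ _) Hle).
  unfold C; apply Rdiv_lt_0_compat; [apply INR_fact_lt_0|].
  apply Rmult_lt_0_compat; apply INR_fact_lt_0.
Qed.

(* Markov's inequality for each [X i] and [Y i], followed by a union bound over [i < n]. *)
Lemma count_not_all_below {A : Type} (l : list A) (n : nat) (X Y : nat -> A -> R) (T1 T2 a b : R) :
  0 < T1 -> 0 < T2 ->
  (forall i h, (i < n)%nat -> In h l -> 0 <= X i h /\ 0 <= Y i h) ->
  (forall i, (i < n)%nat -> lsum (X i) l <= a) ->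
  (forall i, (i < n)%nat -> lsum (Y i) l <= b) ->
  count (fun h => ~ ((forall i, (i < n)%nat -> X i h < T1) /\
                     (forall i, (i < n)%nat -> Y i h < T2))) l
  <= INR n * (a / T1 + b / T2).
Proof.
  intros HT1 HT2 Hnn HX HY.
  eapply Rle_trans.
  { apply (count_le _ (fun h => (exists i, (i < n)%nat /\ T1 <= X i h) \/
                                (exists i, (i < n)%nat /\ T2 <= Y i h))).
    intros h _ Hbad.
    destruct (classic (exists i, (i < n)%nat /\ T1 <= X i h)) as [|HnX]; [now left|].
    destruct (classic (exists i, (i < n)%nat /\ T2 <= Y i h)) as [|HnY]; [now right|].
    exfalso; apply Hbad; split; intros i Hi; apply Rnot_le_lt; intros H;
      [apply HnX | apply HnY]; eauto. }
  eapply Rle_trans; [apply count_or|].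
  rewrite Rmult_plus_distr_l, <- !fsum_const.
  apply Rplus_le_compat; (eapply Rle_trans; [apply count_exists|]); apply fsum_le; intros i Hi.
  - apply Rmult_le_reg_l with T1; [assumption|].
    eapply Rle_trans; [apply count_markov; [assumption | intros h Hh; apply (Hnn i h Hi Hh)]|].
    replace (T1 * (a / T1)) with a by (field; lra); now apply HX.
  - apply Rmult_le_reg_l with T2; [assumption|].
    eapply Rle_trans; [apply count_markov; [assumption | intros h Hh; apply (Hnn i h Hi Hh)]|].
    replace (T2 * (b / T2)) with b by (field; lra); now apply HY.
Qed.

Lemma PrH_ge d (P : list bool -> Prop) c :
  count (fun h => ~ P h) (half_subsets d) <= c * INR (length (half_subsets d)) -> PrH d P >= 1 - c.
Proof.
  intros Hbad; rewrite PrH_count.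
  assert (HN := length_half_subsets_pos d); assert (Hcompl := count_compl P (half_subsets d)).
  apply Rle_ge, Rmult_le_reg_r with (INR (length (half_subsets d))); [assumption|].
  unfold Rdiv; rewrite Rmult_assoc, Rinv_l by lra; lra.
Qed.

Theorem mainTheorem8 (eps beta : R) (d n : nat) (Rs : nat -> nat -> nat -> R) :
  0 < eps ->
  0 < beta < 1 ->
  Nat.Even d ->
  INR d > 4 * (exp (2 * eps) - 1) ^ 2 * ln (2 / beta) ->
  (forall i, (i < n)%nat -> is_randomizer d (Rs i) /\ eps_private d eps (Rs i)) ->
  let v := (exp (2 * eps) - 1) * sqrt (4 / INR d * ln (2 / beta)) in
  PrH d (fun h =>
    (forall i, (i < n)%nat ->
       PrIn (pU d (Rs i)) (Leak d v h (Rs i)) < 6 * beta * INR n) /\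
    (forall i, (i < n)%nat ->
       PrIn (pUH d (Rs i) h) (Leak d v h (Rs i)) < 6 * exp eps * beta * INR n))
  >= 5 / 6.
Proof.
  intros Heps Hbeta Hev Hd HRs v.
  replace (5 / 6) with (1 - 1 / 6) by field; apply PrH_ge.
  set (N := INR (length (half_subsets d))).
  assert (HN : 0 < N) by apply length_half_subsets_pos.
  destruct (Nat.eq_dec n 0) as [->|Hn].
  { rewrite count_false; [lra|]. intros h _ Hbad; apply Hbad; split; intros; lia. }
  assert (Hnpos : 0 < INR n) by (apply lt_0_INR; lia).
  assert (He := exp_pos eps).
  eapply Rle_trans;
    [apply (count_not_all_below _ n _ _ _ _ (1 * (beta / 2 * N)) (exp eps * (beta / 2 * N)))|].
  - apply Rmult_lt_0_compat; lra.
  - repeat apply Rmult_lt_0_compat; lra.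
  - intros i h Hi Hh; destruct (HRs i Hi); now apply leak_mass_nonneg.
  - intros i Hi; destruct (HRs i Hi); now apply expected_leak_mass_U.
  - intros i Hi; destruct (HRs i Hi); now apply expected_leak_mass_UH.
  - right; field; lra.
Qed.
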